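(* Fix $\mu>0$. Then \[ \sum_{\substack{a\ge b,\ c\ge d\\ ad-bc=1}}\frac{1}{(a^2+\mu^2b^2)(c^2+\mu^2d^2)\big((a+c)^2+\mu^2(b+d)^2\big)}=\frac{1}{4\mu^2}\left(\frac{2\arctan\mu}{\mu}-\frac{2}{1+\mu^2}\right), \] where the sum is over all nonnegative integers $a,b,c,d$ with $a\ge b$, $c\ge d$ and $ad-bc=1$. *)

From mathcomp Require Import all_boot all_order all_algebra.
From mathcomp Require Import all_classical all_reals all_analysis.
Set Implicit Arguments. Unset Strict Implicit. Unset Printing Implicit Defensive.
Import Order.TTheory GRing.Theory Num.Theory.
Local Open Scope ring_scope.
Local Open Scope classical_set_scope.

(* Index set: quadruples (a,b,c,d) of nonnegative integers with a >= b,
   c >= d and a*d - b*c = 1 (stated without truncated subtraction). *)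
Definition index_set : set (nat * nat * nat * nat) :=
  [set q | let: (a, b, c, d) := q in
           (b <= a)%N /\ (d <= c)%N /\ (a * d = b * c + 1)%N].

Definition summand (R : realType) (mu : R) (q : nat * nat * nat * nat) : R :=
  let: (a, b, c, d) := q in
  1 / ((a%:R ^+ 2 + mu ^+ 2 * b%:R ^+ 2)
       * (c%:R ^+ 2 + mu ^+ 2 * d%:R ^+ 2)
       * ((a + c)%:R ^+ 2 + mu ^+ 2 * (b + d)%:R ^+ 2)).

(* The quadruples of [index_set] are the nodes of a Stern-Brocot-type tree:
   the root is (1,0,1,1) and the children of (a,b,c,d) are the mediant
   quadruples (a,b,a+c,b+d) and (a+c,b+d,c,d); every quadruple occurs exactly
   once.  Put x = mu b/a, y = mu d/c and
     P = D(x,y) / (2 mu^3),  D(x,y) = atan y - atan x - (y-x)(1+xy)/((1+x^2)(1+y^2)).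
   The summand at a node is P(node) - P(left child) - P(right child): the
   children split [x,y] at the mediant slope, so the arctangents cancel and the
   rest is a rational identity.  Hence the sum over the first n levels is
   P(root) minus the sum of P over level n.  At level n the gaps y - x are
   mu/(ac) <= mu/(n+1) and add up to mu, while D(x,y) <= 2(y-x)^3 by the mean
   value theorem, so that level sum is at most 1/(n+1)^2.  The series is
   therefore P(root) = (atan mu/mu - 1/(1+mu^2)) / (2 mu^2). *)

From mathcomp Require Import all_boot all_order all_algebra.
From mathcomp Require Import all_classical all_reals all_analysis.
From mathcomp Require Import ring zify.
Set Implicit Arguments.
Unset Strict Implicit.
Unset Printing Implicit Defensive.
Import Order.TTheory GRing.Theory Num.Theory.
Import numFieldNormedType.Exports.
Local Open Scope classical_set_scope.

Definition quad := (nat * nat * nat * nat)%type.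

Definition lmed (q : quad) : quad :=
  let: (a, b, c, d) := q in (a, b, a + c, b + d)%N.
Definition rmed (q : quad) : quad :=
  let: (a, b, c, d) := q in (a + c, b + d, c, d)%N.
Definition sb_root : quad := (1, 0, 1, 1)%N.

Fixpoint sb_level (n : nat) : seq quad :=
  if n is n'.+1 then map lmed (sb_level n') ++ map rmed (sb_level n')
  else [:: sb_root].

Lemma index_set_pos {a b c d : nat} :
  index_set (a, b, c, d) -> (0 < a)%N /\ (0 < c)%N.
Proof. by move=> [? [? ?]]; nia. Qed.

Lemma index_set_lmed q : index_set q -> index_set (lmed q).
Proof. by case: q => [[[a b] c] d] [? [? ?]] /=; nia. Qed.

Lemma index_set_rmed q : index_set q -> index_set (rmed q).
Proof. by case: q => [[[a b] c] d] [? [? ?]] /=; nia. Qed.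

Lemma lmed_inj : injective lmed.
Proof. by move=> [[[a b] c] d] [[[a' b'] c'] d'] [? ? ? ?]; congr (_, _, _, _); lia. Qed.

Lemma rmed_inj : injective rmed.
Proof. by move=> [[[a b] c] d] [[[a' b'] c'] d'] [? ? ? ?]; congr (_, _, _, _); lia. Qed.

Lemma sb_level_index_set n q : q \in sb_level n -> index_set q.
Proof.
elim: n q => [|n IH] q /=; first by rewrite inE => /eqP ->.
rewrite mem_cat => /orP[] /mapP[p /IH hp ->].
- exact: index_set_lmed.
- exact: index_set_rmed.
Qed.

Definition denom_prod (q : quad) : nat := let: (a, b, c, d) := q in a * c.

Lemma sb_level_denom_prod n q : q \in sb_level n -> (n < denom_prod q)%N.
Proof.
elim: n q => [|n IH] q /=; first by rewrite inE => /eqP ->.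
rewrite mem_cat => /orP[] /mapP[p hp ->]; have := IH _ hp;
  by case: p hp => [[[a b] c] d] /sb_level_index_set /index_set_pos [? ?] /=; nia.
Qed.

Lemma lmed_neq_rmed p q : index_set p -> index_set q -> lmed p != rmed q.
Proof.
case: p q => [[[a b] c] d] [[[a' b'] c'] d'] /index_set_pos [? ?] /index_set_pos [? ?].
by apply/eqP => -[? _ ? _]; lia.
Qed.

Lemma sb_root_notin_levelS n : sb_root \notin sb_level n.+1.
Proof.
rewrite mem_cat negb_or; apply/andP; split; apply/mapP;
  by move=> -[[[[a b] c] d] /sb_level_index_set /index_set_pos [? ?] []]; lia.
Qed.

Lemma sb_level_uniq n : uniq (sb_level n).
Proof.
elim: n => [|n IH] //=.
rewrite cat_uniq !map_inj_uniq ?IH //=; [|exact: rmed_inj|exact: lmed_inj].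
rewrite andbT; apply/hasPn => _ /mapP[q hq ->]; apply/mapP => -[p hp /esym/eqP].
by apply/negP; apply: lmed_neq_rmed; [exact: sb_level_index_set hp | exact: sb_level_index_set hq].
Qed.

Lemma sb_level_disjoint i j q : q \in sb_level i -> q \in sb_level j -> i = j.
Proof.
elim: i j q => [|i IH] [|j] q //.
- by rewrite inE => /eqP ->; rewrite (negPf (sb_root_notin_levelS j)).
- by move=> + /[1!inE] /eqP qE; rewrite qE (negPf (sb_root_notin_levelS i)).
rewrite /= !mem_cat => /orP[] /mapP[p hp ->] /orP[] /mapP[p' hp' e].
- by move/lmed_inj: e hp' => <- /(IH _ _ hp) ->.
- by move: (lmed_neq_rmed (sb_level_index_set hp) (sb_level_index_set hp')); rewrite e eqxx.
- by move: (lmed_neq_rmed (sb_level_index_set hp') (sb_level_index_set hp)); rewrite e eqxx.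
- by move/rmed_inj: e hp' => <- /(IH _ _ hp) ->.
Qed.

Lemma index_set_parent q : index_set q ->
  q = sb_root \/ exists2 p, index_set p & q = lmed p \/ q = rmed p.
Proof.
case: q => [[[a b] c] d] [ba [dc e]].
have [ac|ca|ac] := ltngtP a c.
- have bd : (b < d)%N by nia.
  have dac : (d + a <= c + b)%N.
    have [a1|a2] : a = 1 \/ (2 <= a)%N by nia.
      by subst a; nia.
    by nia.
  right; exists (a, b, c - a, d - b)%N; last by left; congr (_, _, _, _); lia.
  by split=> //; split; [lia | rewrite !mulnBr; nia].
- have db : (d <= b)%N by nia.
  have bdac : (b - d <= a - c)%N by nia.
  right; exists (a - c, b - d, c, d)%N; last by right; congr (_, _, _, _); lia.
  by split=> //; split=> //; rewrite !mulnBl; nia.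
- subst c; have bd : (b < d)%N by nia.
  have a1 : a = 1 by nia.
  by subst a; left; congr (_, _, _, _); lia.
Qed.

Lemma index_set_sb_level q : index_set q -> exists n, q \in sb_level n.
Proof.
pose denom_sum (q : quad) := let: (a, b, c, d) := q in (a + c)%N.
have [m] := ubnP (denom_sum q); elim: m q => // m IH q hm hq.
have [->|[p hp child]] := index_set_parent hq; first by exists 0%N; rewrite inE.
have [n hn] : exists n, p \in sb_level n.
  apply: IH (hp); move: hm.
  by case: child => ->; case: p hp {hq} => [[[a b] c] d] /index_set_pos [? ?] /=; lia.
by exists n.+1; rewrite /= mem_cat; case: child => ->; rewrite map_f ?orbT.
Qed.

Local Open Scope ring_scope.

Lemma big_sb_levelS (V : nmodType) (h : quad -> V) n :
  \sum_(q <- sb_level n.+1) h q = \sum_(q <- sb_level n) (h (lmed q) + h (rmed q)).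
Proof. by rewrite /= big_cat !big_map big_split. Qed.

Section EsumSeq.
Variables (R : realType) (T : choiceType).

Lemma esum_seq (s : seq T) (f : T -> R) : uniq s ->
  (forall x, 0 <= f x) -> \esum_(x in [set` s]) (f x)%:E = (\sum_(x <- s) f x)%:E.
Proof.
move=> s_uniq f_ge0; rewrite esum_fset ?finite_seq // -?fsbig_seq ?sumEFin //.
by move=> x _; rewrite lee_fin.
Qed.

Lemma esum_bigcup_seq (s : nat -> seq T) (f : T -> R) :
  (forall n, uniq (s n)) -> (forall i j x, x \in s i -> x \in s j -> i = j) ->
  (forall x, 0 <= f x) ->
  \esum_(x in \bigcup_n [set` s n]) (f x)%:E
  = (\sum_(0 <= n <oo) (\sum_(x <- s n) f x)%:E)%E.
Proof.
move=> s_uniq s_disj f_ge0.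
rewrite esum_bigcupT; last 2 first.
- by move=> i j _ _ [x [/= xi xj]]; exact: s_disj xi xj.
- by move=> x; rewrite lee_fin.
rewrite nneseries_esumT; last by move=> n; rewrite lee_fin big_seq sumr_ge0.
by apply: eq_esum => n _; rewrite esum_seq.
Qed.

End EsumSeq.

Lemma eseries_telescope (R : realType) (u e : nat -> R) (c : R) :
  (forall n, \sum_(0 <= k < n) u k = c - e n) -> e @ \oo --> 0 ->
  (\sum_(0 <= k <oo) (u k)%:E)%E = c%:E.
Proof.
move=> partial_sum e_cvg0.
have cvg_c : (fun n => c - e n) @ \oo --> c.
  by rewrite -[X in _ --> X]subr0; apply: cvgB => //; exact: cvg_cst.
have -> : (fun n => \sum_(0 <= k < n) (u k)%:E) = EFin \o (fun n => c - e n).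
  by apply/funext => n /=; rewrite sumEFin partial_sum.
by rewrite EFin_lim ?(cvg_lim _ cvg_c) //; apply/cvg_ex; exists c.
Qed.

Section AtanDefect.
Variable R : realType.

Definition atan_defect (x y : R) : R :=
  atan y - atan x - (y - x) * (1 + x * y) / ((1 + x ^+ 2) * (1 + y ^+ 2)).

Lemma oneDsqr_gt0 (t : R) : 0 < 1 + t ^+ 2.
Proof. by rewrite ltr_pwDl // sqr_ge0. Qed.

Lemma is_derive_atan_defect (x t : R) : is_derive t 1 (atan_defect x)
  (2 * (t - x) ^+ 2 / ((1 + x ^+ 2) * (1 + t ^+ 2) ^+ 2)).
Proof.
have t0 := lt0r_neq0 (oneDsqr_gt0 t); have x0 := lt0r_neq0 (oneDsqr_gt0 x).
(* Products of inverses, so that the [is_derive] instances apply. *)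
have -> : atan_defect x = fun y =>
    atan y - atan x - (y - x) * (1 + x * y) * (1 + y ^+ 2)^-1 * (1 + x ^+ 2)^-1.
  by apply/funext => y; rewrite /atan_defect invfM; ring.
apply: is_derive_eq.
rewrite /GRing.scale /=; field.
by rewrite x0 t0.
Qed.

Lemma atan_defect_bounds (x y : R) : x <= y ->
  0 <= atan_defect x y <= 2 * (y - x) ^+ 3.
Proof.
move=> xy; have der t : derivable (atan_defect x) t 1.
  by case: (is_derive_atan_defect x t).
have [c /itvP cxy eq_mvt] := MVT_segment xy (fun t _ => is_derive_atan_defect x t)
  (derivable_within_continuous (fun t _ => der t)).
have -> : atan_defect x y = atan_defect x y - atan_defect x x.
  by rewrite [X in _ - X]/atan_defect !subrr !mul0r !subr0.
rewrite {}eq_mvt.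
have denom_ge1 : 1 <= (1 + x ^+ 2) * (1 + c ^+ 2) ^+ 2.
  have onePsqr_ge1 (t : R) : 1 <= 1 + t ^+ 2 by rewrite lerDl sqr_ge0.
  by rewrite -[leLHS]mul1r ler_pM ?expr_ge1 // (le_trans ler01).
have yx_ge0 : 0 <= y - x by rewrite subr_ge0.
have cx_ge0 : 0 <= c - x by rewrite subr_ge0 cxy.
have denom_gt0 := lt_le_trans ltr01 denom_ge1.
apply/andP; split.
  by rewrite mulr_ge0 // divr_ge0 ?(ltW denom_gt0) // mulr_ge0 // sqr_ge0.
rewrite [_ ^+ 3]exprSr mulrA ler_wpM2r // ler_pdivrMr //.
apply: (@le_trans _ _ (2 * (y - x) ^+ 2)).
  by rewrite ler_pM2l // lerXn2r ?nnegrE // lerD2r cxy.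
by rewrite ler_peMr // mulr_ge0 // sqr_ge0.
Qed.
End AtanDefect.

Section Mediants.
Variables (R : realType) (mu : R).
Hypothesis mu_gt0 : 0 < mu.

Definition lslope (q : quad) : R := let: (a, b, c, d) := q in mu * b%:R / a%:R.
Definition rslope (q : quad) : R := let: (a, b, c, d) := q in mu * d%:R / c%:R.
Definition slope_gap (q : quad) : R := rslope q - lslope q.

Definition potential (q : quad) : R :=
  atan_defect (lslope q) (rslope q) / (2 * mu ^+ 3).

Lemma index_set_dE (a b c d : nat) : index_set (a, b, c, d) ->
  (d%:R : R) = (b%:R * c%:R + 1) / a%:R.
Proof.
move=> hq; have [a_gt0 _] := index_set_pos hq; case: hq => [_ [_ e]].
by rewrite -natrM natr1 -addn1 -e natrM mulrC mulKf // pnatr_eq0 -lt0n.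
Qed.

Lemma slope_gapE q : index_set q -> slope_gap q = mu / (denom_prod q)%:R.
Proof.
case: q => [[[a b] c] d] hq; have [a_gt0 c_gt0] := index_set_pos hq.
rewrite /slope_gap /= (index_set_dE hq) natrM; field.
by rewrite !pnatr_eq0 -!lt0n a_gt0 c_gt0.
Qed.

Lemma slope_gap_med q : slope_gap q = slope_gap (lmed q) + slope_gap (rmed q).
Proof. by case: q => [[[a b] c] d]; rewrite /slope_gap /=; ring. Qed.

Lemma sum_slope_gap_level n : \sum_(q <- sb_level n) slope_gap q = mu.
Proof.
elim: n => [|n IH]; first by rewrite big_seq1 /slope_gap /= mulr0 !divr1 mulr1 subr0.
by rewrite big_sb_levelS -[RHS]IH; apply: eq_bigr => q _; rewrite -slope_gap_med.
Qed.

Lemma summand_telescope q : index_set q ->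
  summand mu q = potential q - potential (lmed q) - potential (rmed q).
Proof.
case: q => [[[a b] c] d] hq; have [a_gt0 c_gt0] := index_set_pos hq.
have sqr_sum_neq0 (x y : R) : x != 0 -> x ^+ 2 + y ^+ 2 != 0.
  move=> x0; rewrite lt0r_neq0 // ltr_pwDl ?sqr_ge0 //.
  by rewrite lt_neqAle sqr_ge0 andbT eq_sym sqrf_eq0.
have a0 : (a%:R : R) != 0 by rewrite pnatr_eq0 -lt0n.
have c0 : (c%:R : R) != 0 by rewrite pnatr_eq0 -lt0n.
have ac0 : (a%:R + c%:R : R) != 0 by rewrite -natrD pnatr_eq0 addn_eq0 negb_and -lt0n a_gt0.
rewrite /potential /atan_defect /summand /= (index_set_dE hq) !natrD (index_set_dE hq).
field.
by rewrite (lt0r_neq0 mu_gt0) a0 c0 ac0 !sqr_sum_neq0 // ?mulf_neq0.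
Qed.

Lemma potential_level_bounds n q : q \in sb_level n ->
  0 <= potential q <= slope_gap q / (mu * n.+1%:R ^+ 2).
Proof.
move=> hq; have gapE := slope_gapE (sb_level_index_set hq).
have ac_gt_n := sb_level_denom_prod hq.
have ac_gt0 : (0 < denom_prod q)%N := leq_ltn_trans (leq0n n) ac_gt_n.
have gap_ge0 : 0 <= slope_gap q by rewrite gapE divr_ge0 ?ler0n ?(ltW mu_gt0).
have gap_le : slope_gap q <= mu / n.+1%:R.
  by rewrite gapE ler_pM2l // lef_pV2 ?posrE ?ltr0n // ler_nat.
have /andP[defect_ge0 defect_le] : 0 <= atan_defect (lslope q) (rslope q) <= 2 * slope_gap q ^+ 3.
  by apply: atan_defect_bounds; rewrite -subr_ge0.
have mu3_gt0 : 0 < 2 * mu ^+ 3 by rewrite mulr_gt0 // exprn_gt0.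
rewrite /potential divr_ge0 ?(ltW mu3_gt0) //= ler_pdivrMr //.
apply: (le_trans defect_le).
have -> : slope_gap q / (mu * n.+1%:R ^+ 2) * (2 * mu ^+ 3)
    = 2 * (slope_gap q * (mu / n.+1%:R) ^+ 2).
  by field; rewrite nat1r pnatr_eq0 (lt0r_neq0 mu_gt0).
rewrite ler_pM2l // exprS ler_wpM2l // lerXn2r ?nnegrE //.
by rewrite divr_ge0 ?ler0n ?(ltW mu_gt0).
Qed.

Lemma sum_potential_level_bounds n :
  0 <= \sum_(q <- sb_level n) potential q <= n.+1%:R ^- 2.
Proof.
apply/andP; split.
  by rewrite big_seq sumr_ge0 // => q /potential_level_bounds /andP[].
apply: (@le_trans _ _ (\sum_(q <- sb_level n) slope_gap q / (mu * n.+1%:R ^+ 2))).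
  by rewrite !big_seq ler_sum // => q /potential_level_bounds /andP[].
by rewrite -big_distrl /= sum_slope_gap_level invfM mulrA divff ?mul1r ?(lt0r_neq0 mu_gt0).
Qed.

Lemma cvg_sum_potential_level :
  (fun n => \sum_(q <- sb_level n) potential q) @ \oo --> 0.
Proof.
apply: (squeeze_cvgr _ (cvg_cst 0) cvg_harmonic); apply: nearW => n.
have /andP[-> /le_trans ->] // := sum_potential_level_bounds n.
by rewrite expr2 invfM ler_piMr // invf_le1 ?ler1n ?ltr0n.
Qed.

Lemma sum_summand_levels n :
  \sum_(0 <= k < n) \sum_(q <- sb_level k) summand mu q
  = potential sb_root - \sum_(q <- sb_level n) potential q.
Proof.
elim: n => [|n IH]; first by rewrite big_geq // big_seq1 subrr.
have telescope : \sum_(q <- sb_level n) summand mu q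
    = \sum_(q <- sb_level n) (potential q - (potential (lmed q) + potential (rmed q))).
  rewrite !big_seq; apply: eq_bigr => q /sb_level_index_set/summand_telescope ->.
  by rewrite opprD addrA.
by rewrite big_nat_recr //= IH big_sb_levelS telescope sumrB addrA subrK.
Qed.

Lemma potential_sb_root :
  potential sb_root = 1 / (4 * mu ^+ 2) * (2 * atan mu / mu - 2 / (1 + mu ^+ 2)).
Proof.
rewrite /potential /atan_defect /= mulr0 mul0r mulr1 divr1 atan0.
by field; rewrite (lt0r_neq0 (oneDsqr_gt0 _)) (lt0r_neq0 mu_gt0).
Qed.

End Mediants.

Lemma summand_ge0 (R : realType) (mu : R) q : 0 <= summand mu q.
Proof.
have norm_ge0 (x y : R) : 0 <= x ^+ 2 + mu ^+ 2 * y ^+ 2.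
  by rewrite addr_ge0 ?sqr_ge0 // mulr_ge0 ?sqr_ge0.
by case: q => [[[a b] c] d]; rewrite /summand divr_ge0 ?mulr_ge0.
Qed.

Lemma index_setE : index_set = \bigcup_n [set` sb_level n].
Proof.
apply/seteqP; split=> q; last by case=> n _; exact: sb_level_index_set.
by move=> /index_set_sb_level [n hn]; exists n.
Qed.

Theorem theorem9 (R : realType) (mu : R) (hmu : 0 < mu) :
  \esum_(q in index_set) (summand mu q)%:E
  = ((1 / (4 * mu ^+ 2)) * (2 * atan mu / mu - 2 / (1 + mu ^+ 2)))%:E.
Proof.
rewrite index_setE esum_bigcup_seq; last 3 first.
- exact: sb_level_uniq.
- exact: sb_level_disjoint.
- exact: summand_ge0.
rewrite (eseries_telescope (sum_summand_levels hmu) (cvg_sum_potential_level hmu)).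
by rewrite potential_sb_root.
Qed.
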